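(* Let $\mathbb{F}$ be a field, $m,b\in\mathbb{F}$ with $m\ne0$, $m\neq1$, let $\mathfrak{A}$ be the unital associative $\mathbb{F}$-algebra generated by $A,B$ subject to $AB=mBA+bI$, and let $C=AB-BA$. For every positive integer $n$, $$(m-1)^nA^nB^n=\prod_{i=1}^n(m^iC-bI),\qquad (m-1)^nB^nA^n=\prod_{i=0}^{n-1}(m^{-i}C-bI).$$
   Context: $I$ is the unity of $\mathfrak{A}$; the factors in each product commute since they are polynomials in $C$. *)

From HB Require Import structures.
From mathcomp Require Import all_boot all_order all_algebra.
Set Implicit Arguments. Unset Strict Implicit. Unset Printing Implicit Defensive.

(** Put C := A B - B A and a := (m - 1) A.  Since A B - m B A = b is central,
    a and B twist-commute with C (a C = m C a, B C = m^-1 C B), while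
    a B = m C - b and B a = C - b.  Pushing x across a product of factors
    k^i C - b multiplies each coefficient by k, so x^n y^n = x (x^(n-1) y^(n-1)) y
    unwinds by induction for (x, y) = (a, B) and (B, a); the new factor x y can
    then be moved to the front, as all factors are polynomials in C. *)

From HB Require Import structures.
From mathcomp Require Import all_boot all_order all_algebra.
Import GRing.Theory.
Local Open Scope ring_scope.

Section TwistedCommutation.
Variables (K : comPzRingType) (R : algType K).
Implicit Types (x y z : R) (k c d a e : K).

Lemma comm_scale_subr_alg z c d a e :
  GRing.comm (c *: z - a%:A) (d *: z - e%:A).
Proof.
have comm_scale c' d' : GRing.comm (c' *: z) (d' *: z).
  by rewrite /GRing.comm -!scalerAl -!scalerAr !scalerA mulrC.
apply: commrB; last exact/commr_sym/comm_alg.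
apply/commr_sym/commrB; first exact: comm_scale.
exact/commr_sym/comm_alg.
Qed.

Lemma commutator_twistl x y k :
  GRing.comm x (x * y - k *: (y * x)) ->
  x * (x * y - y * x) = k *: ((x * y - y * x) * x).
Proof.
(* x [x, y] - k [x, y] x is the commutator of x with x y - k y x. *)
move=> /eqP; rewrite -subr_eq0 => /eqP cx; apply/eqP; rewrite -subr_eq0 -{}cx.
rewrite !(mulrBr, mulrBl) -scalerAr -!scalerAl !mulrA scalerBr !opprB !addrA.
by rewrite addrAC (addrAC (x * x * y)) [X in _ == X]addrAC.
Qed.

Lemma commutator_twistr x y k :
  GRing.comm y (x * y - k *: (y * x)) ->
  (x * y - y * x) * y = k *: (y * (x * y - y * x)).
Proof.
move=> /esym/eqP; rewrite -subr_eq0 => /eqP cy; apply/eqP; rewrite -subr_eq0 -{}cy.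
rewrite !(mulrBr, mulrBl) -scalerAr -!scalerAl !mulrA scalerBr !opprB !addrA.
by rewrite addrAC (addrAC (x * y * y)) [X in _ == X]addrAC.
Qed.

Lemma mul_prod_twist x z k a (I : Type) (r : seq I) (f : I -> K) :
  x * z = k *: (z * x) ->
  x * \prod_(i <- r) (f i *: z - a%:A)
    = \prod_(i <- r) ((f i * k) *: z - a%:A) * x.
Proof.
move=> xz; elim: r => [|i r IHr]; first by rewrite !big_nil mul1r mulr1.
have x_lin : x * (f i *: z - a%:A) = ((f i * k) *: z - a%:A) * x.
  by rewrite mulrBr mulrBl -scalerAr xz mulr_algr mulr_algl scalerA scalerAl.
by rewrite !big_cons mulrA x_lin -!mulrA IHr.
Qed.

Lemma exprM_twist_prod x y z k a j n :
  x * z = k *: (z * x) -> x * y = k ^+ j *: z - a%:A ->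
  x ^+ n * y ^+ n = \prod_(j <= i < j + n) (k ^+ i *: z - a%:A).
Proof.
move=> xz xy; elim: n => [|n IHn]; first by rewrite addn0 big_geq // !expr0 mulr1.
rewrite exprS exprSr mulrA -(mulrA x) IHn (mul_prod_twist _ _ k) // -mulrA xy.
rewrite -(commr_prod _ (fun i _ => comm_scale_subr_alg z _ _ a a)).
rewrite addnS big_nat_recl ?leq_addr //; congr (_ * _).
by apply: eq_bigr => i _; rewrite exprSr.
Qed.

End TwistedCommutation.

Section QuantumWeylRelation.
Variables (F : fieldType) (R : algType F) (m b : F) (A B : R).
Hypothesis AB : A * B = m *: (B * A) + b%:A.

Let C := A * B - B * A.
Let a := (m - 1) *: A.

Lemma twisted_commutator_alg : A * B - m *: (B * A) = b%:A.
Proof. by rewrite AB addrC addKr. Qed.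

Lemma twistAC : A * C = m *: (C * A).
Proof.
by apply: commutator_twistl; rewrite twisted_commutator_alg; exact/commr_sym/comm_alg.
Qed.

Lemma twistCB : C * B = m *: (B * C).
Proof.
by apply: commutator_twistr; rewrite twisted_commutator_alg; exact/commr_sym/comm_alg.
Qed.

Lemma twistaC : a * C = m *: (C * a).
Proof. by rewrite -scalerAl twistAC -scalerAr !scalerA mulrC. Qed.

Lemma mul_aB : a * B = m ^+ 1 *: C - b%:A.
Proof. by rewrite expr1 -scalerAl scalerBl scale1r scalerBr -addrA -opprD -AB. Qed.

Hypothesis m_neq0 : m != 0.

Lemma twistBC : B * C = m^-1 *: (C * B).
Proof. by rewrite twistCB scalerA mulVf // scale1r. Qed.

Lemma mul_Ba : B * a = m^-1 ^+ 0 *: C - b%:A.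
Proof. by rewrite expr0 scale1r -scalerAr scalerBl scale1r /C AB addrAC addrK. Qed.

Lemma scale_exprA_exprB n :
  (m - 1) ^+ n *: (A ^+ n * B ^+ n) = \prod_(1 <= i < n.+1) (m ^+ i *: C - b%:A).
Proof.
by rewrite scalerAl -exprZn; apply: exprM_twist_prod; [exact: twistaC | exact: mul_aB].
Qed.

Lemma scale_exprB_exprA n :
  (m - 1) ^+ n *: (B ^+ n * A ^+ n) = \prod_(0 <= i < n) (m ^- i *: C - b%:A).
Proof.
rewrite scalerAr -exprZn; under eq_bigr do rewrite -exprVn.
by apply: exprM_twist_prod; [exact: twistBC | exact: mul_Ba].
Qed.

End QuantumWeylRelation.

Theorem mainTheorem7 (F : fieldType) (R : algType F) (m b : F) (A B : R) :
  m != 0 -> m != 1 ->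
  A * B = m *: (B * A) + b%:A ->
  forall n : nat, (0 < n)%N ->
    ((m - 1) ^+ n) *: (A ^+ n * B ^+ n)
      = \prod_(1 <= i < n.+1) (m ^+ i *: (A * B - B * A) - b%:A)
    /\
    ((m - 1) ^+ n) *: (B ^+ n * A ^+ n)
      = \prod_(0 <= i < n) (m ^- i *: (A * B - B * A) - b%:A).
Proof.
move=> m_neq0 _ AB n _.
by split; [exact: scale_exprA_exprB | exact: scale_exprB_exprA].
Qed.
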